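(* Let $\alpha\in\ell^2$. For every $p>0$ there exists a constant $C_p$ depending only on $p$ such that $$\|(\sigma_k)_{k\in\mathbb{N}}\|_{\ell^p}\le C_p\,\|(a_k(R_\alpha))_{k\ge1}\|_{\ell^p},$$ where the $\ell^p$-(quasi)norms may be infinite.
   Context: $\mathbb{N}=\{0,1,2,\dots\}$; $(R_\alpha f)(k)=\alpha_k\sum_{j=0}^kf(j)$ on $\ell^2$ (square-summable functions $\mathbb{N}\to\mathbb{C}$). $\sigma_k=(\sum_{j=2^k}^{2^{k+1}-1}(j+1)|\alpha_j|^2)^{1/2}$. Approximation numbers: $a_{n+1}(T)=\inf\{\|T-P\|:P$ linear with rank $\le n\}$, $n\ge0$. *)

From HB Require Import structures.
From mathcomp Require Import all_boot all_order all_algebra.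
From mathcomp Require Import all_classical all_reals all_analysis.
From mathcomp Require Import complex.
Set Implicit Arguments. Unset Strict Implicit. Unset Printing Implicit Defensive.
Import Order.TTheory GRing.Theory Num.Theory.
Local Open Scope ring_scope.
Local Open Scope classical_set_scope.

Section Defs.
Variable R : realType.

Definition cseq := nat -> R[i].

Definition cmod2 (z : R[i]) : R := (complex.Re z) ^+ 2 + (complex.Im z) ^+ 2.

Definition sqnorm (f : cseq) : \bar R :=
  (\sum_(0 <= k <oo) (cmod2 (f k))%:E)%E.

Definition inl2 (f : cseq) : Prop := (sqnorm f < +oo)%E.

Definition Ralpha (alpha : cseq) (f : cseq) : cseq :=
  fun k => alpha k * \sum_(0 <= j < k.+1) f j.

Definition l2_linear (P : cseq -> cseq) : Prop :=
  (forall f, inl2 f -> inl2 (P f)) /\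
  (forall f g, inl2 f -> inl2 g -> P (f \+ g) = P f \+ P g) /\
  (forall (c : R[i]) f, inl2 f -> P (fun k => c * f k) = (fun k => c * P f k)).

Definition rank_le (P : cseq -> cseq) (n : nat) : Prop :=
  exists g : 'I_n -> cseq, (forall i, inl2 (g i)) /\
    forall f, inl2 f -> exists c : 'I_n -> R[i],
      P f = (fun k => \sum_(i < n) c i * g i k).

Definition opnorm (T : cseq -> cseq) : \bar R :=
  ereal_sup [set poweR (sqnorm (T f)) (2^-1) | f in [set f | inl2 f /\ (sqnorm f <= 1)%E]].

(* approximation numbers: approx_num T n = a_{n+1}(T)
   = inf { ||T - P|| : P linear with rank <= n } *)
Definition approx_num (T : cseq -> cseq) (n : nat) : \bar R :=
  ereal_inf [set opnorm (fun f => T f \- P f) | P in [set P | l2_linear P /\ rank_le P n]].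

Definition sigma (alpha : cseq) (k : nat) : R :=
  Num.sqrt (\sum_(2 ^ k <= j < 2 ^ k.+1) (j.+1)%:R * cmod2 (alpha j)).

Definition lpnorm (p : R) (x : nat -> \bar R) : \bar R :=
  poweR (\sum_(0 <= k <oo) poweR (x k) p)%E p^-1.

End Defs.

From HB Require Import structures.
From mathcomp Require Import all_boot all_order all_algebra.
From mathcomp Require Import all_classical all_reals all_analysis.
From mathcomp Require Import complex.
From mathcomp Require Import ring lra zify.
Import Order.TTheory GRing.Theory Num.Theory.
Local Open Scope ring_scope.
Local Open Scope complex_scope.

(* Fix indices k_0, ..., k_m pairwise at distance at least 3.  The test vector
   f_k is 1 on [2^k/2, 2^k) and -1 on [2^(k+1), 2^(k+1) + b_k), where
   b_k = 2^k - 2^k/2, so its partial sums equal b_k on the dyadic block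
   [2^k, 2^(k+1)) and vanish on the blocks of the other k_r, and the f_(k_r)
   have disjoint supports.  An operator P of rank at most m annihilates some
   nonzero x = sum_r v_r f_(k_r); on block k_r the vector R_alpha x is
   alpha_j v_r b_(k_r), and since sigma_k^2 <= 4 b_k sum_(j in block k) |alpha_j|^2
   this gives ||(R_alpha - P) x||^2 >= (min_r sigma_(k_r))^2 ||x||^2 / 8, i.e.
   a_(m+1)(R_alpha) >= min_r sigma_(k_r) / 3.  Peeling off the index of least
   sigma turns this into sum_k sigma_k^p <= 3^p sum_n a_n^p on every
   well-separated set of indices; the three residue classes mod 3 are well
   separated, so C_p = (3 * 3^p)^(1/p) works. *)

Section ComplexModulus.
Variable R : realType.
Implicit Types z w : R[i].

Lemma cmod2E z : (cmod2 z)%:C = z * conjc z.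
Proof.
case: z => a b; apply/eqP; rewrite eq_complex /= /cmod2 /=.
by apply/andP; split; apply/eqP; rewrite ?expr2; ring.
Qed.

Lemma cmod2_ge0 z : 0 <= cmod2 z.
Proof. by rewrite addr_ge0 ?sqr_ge0. Qed.

Lemma cmod2_eq0 z : (cmod2 z == 0) = (z == 0).
Proof.
case: z => a b; rewrite /cmod2 /= paddr_eq0 ?sqr_ge0 // !sqrf_eq0.
by rewrite eq_complex.
Qed.

Lemma cmod2M z w : cmod2 (z * w) = cmod2 z * cmod2 w.
Proof. by apply: (@complexI R); rewrite rmorphM /= !cmod2E rmorphM /=; ring. Qed.

Lemma cmod2_real (r : R) : cmod2 r%:C = r ^+ 2.
Proof. by rewrite /cmod2 /= expr0n addr0. Qed.

Lemma cmod2_natr (n : nat) : cmod2 (n%:R : R[i]) = n%:R ^+ 2.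
Proof. by rewrite -cmod2_real rmorph_nat. Qed.

Lemma cmod20 : cmod2 (0 : R[i]) = 0.
Proof. by rewrite -(rmorph0 (real_complex R)) cmod2_real expr0n. Qed.

Lemma cmod2N z : cmod2 (- z) = cmod2 z.
Proof. by case: z => a b; rewrite /cmod2 /= !sqrrN. Qed.

Lemma cmod2_sum_disjoint (I : finType) (h : I -> R[i]) :
  (forall i i', i != i' -> h i != 0 -> h i' != 0 -> False) ->
  cmod2 (\sum_i h i) = \sum_i cmod2 (h i).
Proof.
move=> hdisj; have [i0 hi0|h0] := pickP (fun i => h i != 0); last first.
  have h0' i : h i = 0 by apply/eqP/negbFE/h0.
  by rewrite big1 ?cmod20 ?big1 // => i _; rewrite h0' ?cmod20.
have hzero i : i != i0 -> h i = 0.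
  by move=> hi; apply: contra_notP (hdisj _ _ hi ^~ hi0) => /eqP.
by rewrite (bigD1 i0) // [in RHS](bigD1 i0) //= !big1 ?addr0 // => i /hzero ->;
  rewrite ?cmod20.
Qed.

End ComplexModulus.

Lemma exists_nonzero_left_kernel {F : fieldType} {m n} (A : 'M[F]_(m, n)) :
  (n < m)%N -> exists2 v : 'rV_m, v != 0 & v *m A = 0.
Proof.
move=> nm; have : ~~ row_free A.
  by rewrite /row_free neq_ltn (leq_ltn_trans (rank_leq_col A) nm).
by rewrite -kermx_eq0 => /rowV0Pn[v /sub_kermxP vA v0]; exists v.
Qed.

Section SquareSummable.
Variable R : realType.
Implicit Types (f : cseq R) (M : nat).

Definition supported_below M f := forall j, (M <= j)%N -> f j = 0.

Lemma sqnorm_supported {M f} : supported_below M f ->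
  sqnorm f = (\sum_(0 <= j < M) cmod2 (f j))%:E.
Proof.
move=> fM; rewrite /sqnorm (nneseries_split 0 M); last by move=> k _; rewrite lee_fin cmod2_ge0.
by rewrite add0n eseries0 ?adde0 ?sumEFin // => j jM _; rewrite fM ?cmod20.
Qed.

Lemma inl2_supported {M f} : supported_below M f -> inl2 f.
Proof. by move=> fM; rewrite /inl2 (sqnorm_supported fM) ltry. Qed.

Lemma sqnorm_ge_partial f M : ((\sum_(0 <= j < M) cmod2 (f j))%:E <= sqnorm f)%E.
Proof. by rewrite -sumEFin; apply: nneseries_lim_ge => k _ _; rewrite lee_fin cmod2_ge0. Qed.

Lemma l2_linear0 (P : cseq R -> cseq R) : l2_linear P -> P (fun=> 0) = (fun=> 0).
Proof.
case=> _ [_ PZ]; have := PZ 0 (fun=> 0) (@inl2_supported 0 _ (fun=> fun=> erefl)).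
by rewrite (_ : (fun=> 0 * 0) = fun=> 0) => [->|]; apply: funext => k; rewrite mul0r.
Qed.

Lemma l2_linear_sum (P : cseq R -> cseq R) (I : Type) (s : seq I)
    (v : I -> R[i]) (h : I -> cseq R) M :
  l2_linear P -> (forall i, supported_below M (h i)) ->
  P (fun j => \sum_(i <- s) v i * h i j) = (fun j => \sum_(i <- s) v i * P (h i) j).
Proof.
move=> linP hM; have [_ [PD PZ]] := linP.
have inl2_comb (t : seq I) : inl2 (fun j => \sum_(i <- t) v i * h i j).
  by apply: (@inl2_supported M) => j jM; rewrite big1 // => i _; rewrite hM ?mulr0.
elim: s => [|i s IH].
  rewrite (_ : (fun=> _) = fun=> 0) ?l2_linear0 //; apply: funext => j; by rewrite big_nil.
have -> : (fun j => \sum_(k <- i :: s) v k * h k j) =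
    (fun j => v i * h i j) \+ (fun j => \sum_(k <- s) v k * h k j).
  by apply: funext => j; rewrite big_cons.
have vhi : inl2 (fun j => v i * h i j).
  by apply: (@inl2_supported M) => j jM; rewrite hM ?mulr0.
rewrite PD // PZ; last exact: inl2_supported (hM i).
by rewrite IH; apply: funext => j; rewrite big_cons.
Qed.

Lemma opnorm_ge (T : cseq R -> cseq R) f (c : R) : 0 <= c ->
  inl2 f -> (sqnorm f <= 1)%E -> ((c ^+ 2)%:E <= sqnorm (T f))%E -> (c%:E <= opnorm T)%E.
Proof.
move=> c0 f2 f1 Tf.
have -> : c%:E = poweR (c ^+ 2)%:E 2^-1.
  by rewrite poweR_EFin powR12_sqrt ?sqr_ge0 // sqrtr_sqr ger0_norm.
apply: le_trans (ereal_sup_ubound _); last by exists f.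
apply: gt0_ler_poweR => //; rewrite in_itv /= leey ?andbT ?lee_fin ?sqr_ge0 //.
by apply: le_trans Tf; rewrite lee_fin sqr_ge0.
Qed.

End SquareSummable.

Arguments supported_below {R}.
Arguments sqnorm_supported {R M f}.
Arguments inl2_supported {R M f}.
Arguments sqnorm_ge_partial {R}.

Definition well_separated (k k' : nat) := ((k + 3 <= k') || (k' + 3 <= k))%N.

Lemma well_separated_pow2 k k' : well_separated k k' ->
  ((8 * 2 ^ k <= 2 ^ k') || (8 * 2 ^ k' <= 2 ^ k))%N.
Proof.
have pow2_le a b : (a + 3 <= b)%N -> (8 * 2 ^ a <= 2 ^ b)%N.
  by move=> ab; rewrite -(expnD 2 3) addnC leq_pexp2l.
by case/orP => [/pow2_le -> | /pow2_le ->]; rewrite ?orbT.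
Qed.

Definition in_interval (a b j : nat) : nat := (a <= j < b)%N.

Lemma sum_in_interval a b n : (a <= b)%N ->
  (\sum_(0 <= i < n) in_interval a b i = minn n b - minn n a)%N.
Proof.
move=> ab; elim: n => [|n IH]; first by rewrite big_nil; lia.
by rewrite big_nat_recr //= IH /in_interval; case: leqP; case: ltnP => /=; lia.
Qed.

Definition test_start k := ((2 ^ k)./2)%N.
Definition test_height k := (2 ^ k - test_start k)%N.

Lemma test_start_facts k : [/\ (test_start k + test_start k <= 2 ^ k)%N,
  (2 ^ k <= test_start k + test_start k + 1)%N, (0 < 2 ^ k)%N,
  (2 ^ k.+1 = 2 * 2 ^ k)%N & (2 ^ k.+2 = 4 * 2 ^ k)%N].
Proof.
have := odd_double_half (2 ^ k); rewrite -addnn /test_start !expnS expn_gt0.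
by case: odd => /=; split; lia.
Qed.

Section TestVectors.
Variable R : realType.

Definition test_vec k : cseq R := fun j =>
  (in_interval (test_start k) (2 ^ k) j)%:R -
  (in_interval (2 ^ k.+1) (2 ^ k.+1 + test_height k) j)%:R.

Lemma test_vec_partial k j : \sum_(0 <= i < j.+1) test_vec k i =
  (minn j.+1 (2 ^ k) - minn j.+1 (test_start k))%N%:R -
  (minn j.+1 (2 ^ k.+1 + test_height k) - minn j.+1 (2 ^ k.+1))%N%:R.
Proof.
have [? ? ? ? ?] := test_start_facts k.
by rewrite sumrB -!natr_sum !sum_in_interval //; lia.
Qed.

Lemma test_vec_partial_block k j : (2 ^ k <= j < 2 ^ k.+1)%N ->
  \sum_(0 <= i < j.+1) test_vec k i = (test_height k)%:R.
Proof.
move=> kj; have [? ? ? ? ?] := test_start_facts k.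
rewrite test_vec_partial.
have -> : (minn j.+1 (2 ^ k) - minn j.+1 (test_start k) = test_height k)%N.
  by rewrite /test_height; lia.
by have -> : (minn j.+1 (2 ^ k.+1 + test_height k) - minn j.+1 (2 ^ k.+1) = 0)%N;
  rewrite ?subr0 //; lia.
Qed.

Lemma test_vec_partial_separated k k' j : well_separated k k' ->
  (2 ^ k' <= j < 2 ^ k'.+1)%N -> \sum_(0 <= i < j.+1) test_vec k i = 0.
Proof.
move=> /well_separated_pow2 kk' k'j; rewrite test_vec_partial.
have [? ? ? ? ?] := test_start_facts k; have [? ? ? ? ?] := test_start_facts k'.
by apply/eqP; rewrite subr_eq0 eqr_nat /test_height; lia.
Qed.

Lemma test_vec_neq0 k j : test_vec k j != 0 -> (test_start k <= j < 2 ^ k.+2)%N.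
Proof.
apply: contraR; rewrite negb_and -ltnNge -leqNgt /test_vec /in_interval.
have [? ? ? ? ?] := test_start_facts k.
case/orP => [lo|hi].
  have lo' : (j < 2 ^ k.+1)%N by lia.
  by rewrite (leqNgt (test_start k)) lo (ltn_geF lo') subrr.
have hi1 : (2 ^ k <= j)%N by lia.
have hi2 : (2 ^ k.+1 + test_height k <= j)%N by rewrite /test_height; lia.
by rewrite (leq_gtF hi1) (leq_gtF hi2) !andbF subrr.
Qed.

Lemma supported_test_vec k : supported_below (2 ^ k.+2)%N (test_vec k).
Proof.
by move=> j kj; apply/eqP; apply: contraT => /test_vec_neq0/andP[_]; rewrite ltnNge kj.
Qed.

Lemma test_vec_disjoint k k' j : well_separated k k' ->
  test_vec k j != 0 -> test_vec k' j != 0 -> False.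
Proof.
move=> /well_separated_pow2/orP kk' /test_vec_neq0/andP[? ?] /test_vec_neq0/andP[? ?].
have [? ? ? ? ?] := test_start_facts k; have [? ? ? ? ?] := test_start_facts k'.
by case: kk'; lia.
Qed.

Lemma sum_cmod2_test_vec k M :
  \sum_(0 <= j < M) cmod2 (test_vec k j) <= 2 * (test_height k)%:R.
Proof.
have cmod2_diff (a b : bool) : cmod2 ((a : nat)%:R - (b : nat)%:R : R[i]) <= a%:R + b%:R.
  by case: a; case: b; rewrite ?subrr ?subr0 ?sub0r ?cmod2N ?cmod20 ?cmod2_natr //=; lra.
apply: le_trans (ler_sum _ (fun j _ => cmod2_diff _ _)) _.
have [? ? ? ? ?] := test_start_facts k.
have sk : (test_start k <= 2 ^ k)%N by lia.
rewrite big_split /= -!natr_sum.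
rewrite (eq_bigr (in_interval (test_start k) (2 ^ k))) // sum_in_interval //.
rewrite (eq_bigr (in_interval (2 ^ k.+1) (2 ^ k.+1 + test_height k))) //.
rewrite sum_in_interval ?leq_addr //.
by rewrite -natrD -natrM ler_nat /test_height; lia.
Qed.

End TestVectors.

Lemma sum_dyadic_blocks_le {R : numDomainType} {I : finType} {kap : I -> nat}
    {M : nat} {F : nat -> R} :
  injective kap -> (forall i, 2 ^ (kap i).+1 <= M)%N -> (forall j, 0 <= F j) ->
  \sum_i \sum_(2 ^ kap i <= j < 2 ^ (kap i).+1) F j <= \sum_(0 <= j < M) F j.
Proof.
move=> kap_inj kapM F0.
have restrict a b : (b <= M)%N ->
    \sum_(a <= j < b) F j = \sum_(0 <= j < M) (a <= j < b)%N%:R * F j.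
  move=> bM; rewrite (big_nat_widenl _ 0) // (big_nat_widen _ _ _ _ _ bM) big_mkcond.
  by apply: eq_bigr => j _; rewrite andTb; case: (_ && _); rewrite ?mul1r ?mul0r.
under eq_bigr => i _ do rewrite restrict //.
rewrite exchange_big /=; apply: ler_sum => j _; rewrite -mulr_suml ler_piMl //.
rewrite -natr_sum lern1 -big_mkcond /= sum1_card.
apply/card_le1_eqP => i i' ji ji'; apply: kap_inj.
by rewrite -(trunc_log_eq _ ji) ?(trunc_log_eq _ ji').
Qed.

Section LowerBound.
Variables (R : realType) (alpha : cseq R).

Definition block_mass k := \sum_(2 ^ k <= j < 2 ^ k.+1) cmod2 (alpha j).

Lemma sigma_sqr_le k : sigma alpha k ^+ 2 <= 4 * (test_height k)%:R * block_mass k.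
Proof.
rewrite sqr_sqrtr; last by apply: sumr_ge0 => j _; rewrite mulr_ge0 ?cmod2_ge0.
apply: (@le_trans _ _ (\sum_(2 ^ k <= j < 2 ^ k.+1) (2 ^ k.+1)%:R * cmod2 (alpha j))).
  by apply: ler_sum_nat => j /andP[_ jk]; apply: ler_wpM2r; rewrite ?cmod2_ge0 ?ler_nat.
rewrite -mulr_sumr; apply: ler_wpM2r; first by apply: sumr_ge0 => j _; apply: cmod2_ge0.
have [? ? ? ? ?] := test_start_facts k.
by rewrite -natrM ler_nat /test_height; lia.
Qed.

Variables (m : nat) (kap : 'I_m.+1 -> nat).
Hypothesis kap_sep : forall r r', r != r' -> well_separated (kap r) (kap r').

Let bound := (2 ^ (\max_r kap r)%N.+2)%N.

Lemma pow2_kap_le_bound r : (2 ^ (kap r).+2 <= bound)%N.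
Proof. by rewrite leq_pexp2l // !ltnS (leq_bigmax r). Qed.

Definition test_comb (v : 'I_m.+1 -> R[i]) : cseq R :=
  fun j => \sum_r v r * test_vec R (kap r) j.

Definition test_weight (v : 'I_m.+1 -> R[i]) : R :=
  \sum_r cmod2 (v r) * (test_height (kap r))%:R.

Lemma supported_test_vec_kap r : supported_below bound (test_vec R (kap r)).
Proof. by move=> j /(leq_trans (pow2_kap_le_bound r)); apply: supported_test_vec. Qed.

Lemma supported_test_comb v : supported_below bound (test_comb v).
Proof.
by move=> j jb; rewrite /test_comb big1 // => r _; rewrite supported_test_vec_kap ?mulr0.
Qed.

Lemma sqnorm_test_comb v : (sqnorm (test_comb v) <= (2 * test_weight v)%:E)%E.
Proof.
rewrite (sqnorm_supported (supported_test_comb v)) lee_fin.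
apply: (@le_trans _ _
  (\sum_(0 <= j < bound) \sum_r cmod2 (v r) * cmod2 (test_vec R (kap r) j))).
  apply: ler_sum => j _; rewrite /test_comb cmod2_sum_disjoint.
    by under eq_bigr do rewrite cmod2M.
  move=> r r' rr' /eqP vr /eqP vr'; apply: (@test_vec_disjoint R _ _ j (kap_sep _ _ rr')).
    by apply/eqP => h; apply: vr; rewrite h mulr0.
  by apply/eqP => h; apply: vr'; rewrite h mulr0.
rewrite exchange_big /= /test_weight mulr_sumr; apply: ler_sum => r _.
by rewrite -mulr_sumr mulrCA ler_wpM2l ?cmod2_ge0 ?sum_cmod2_test_vec.
Qed.

Lemma Ralpha_test_comb_block v r j : (2 ^ kap r <= j < 2 ^ (kap r).+1)%N ->
  Ralpha alpha (test_comb v) j = alpha j * (v r * (test_height (kap r))%:R).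
Proof.
move=> jr; rewrite /Ralpha /test_comb; congr (_ * _).
rewrite exchange_big /= (bigD1 r) //= -mulr_sumr test_vec_partial_block //.
rewrite big1 ?addr0 // => r' r'r.
by rewrite -mulr_sumr (@test_vec_partial_separated R _ _ j (kap_sep _ _ r'r)) ?mulr0.
Qed.

Lemma sqnorm_Ralpha_test_comb (c : R) v : 0 <= c ->
    (forall r, c <= sigma alpha (kap r)) ->
  ((c ^+ 2 / 4 * test_weight v)%:E <= sqnorm (Ralpha alpha (test_comb v)))%E.
Proof.
move=> c0 c_sigma; apply: (le_trans _ (sqnorm_ge_partial _ bound)); rewrite lee_fin.
have kap_inj : injective kap.
  move=> r r' /eqP; apply: contraTeq => /(kap_sep r r'); rewrite /well_separated; lia.
have kap_bound r : (2 ^ (kap r).+1 <= bound)%N.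
  by apply: leq_trans (pow2_kap_le_bound r); rewrite leq_pexp2l.
apply: (le_trans _ (sum_dyadic_blocks_le kap_inj kap_bound (fun j => cmod2_ge0 _ _))).
rewrite /test_weight mulr_sumr; apply: ler_sum => r _.
under eq_big_nat => j jr do rewrite (Ralpha_test_comb_block v _ _ jr) !cmod2M cmod2_natr.
rewrite -mulr_suml -/(block_mass _).
have sigma2 : c ^+ 2 <= 4 * (test_height (kap r))%:R * block_mass (kap r).
  have sigma0 : 0 <= sigma alpha (kap r) by apply: sqrtr_ge0.
  by apply: le_trans (sigma_sqr_le _); rewrite lerXn2r ?nnegrE.
have wh : 0 <= cmod2 (v r) * (test_height (kap r))%:R by rewrite mulr_ge0 ?cmod2_ge0.
nra.
Qed.

Lemma test_weight_gt0 v r : v r != 0 -> 0 < test_weight v.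
Proof.
move=> vr; rewrite /test_weight (bigD1 r) //=.
apply: ltr_wpDr; first by apply: sumr_ge0 => i _; rewrite mulr_ge0 ?cmod2_ge0.
have [? ? ? ? ?] := test_start_facts (kap r).
apply: mulr_gt0; first by rewrite lt_def cmod2_eq0 vr cmod2_ge0.
by rewrite ltr0n /test_height; lia.
Qed.

Lemma test_comb_kernel (P : cseq R -> cseq R) : l2_linear P -> rank_le P m ->
  exists2 w : 'rV[R[i]]_m.+1, w != 0 &
    forall lam, P (test_comb (fun r => lam * w 0 r)) = fun=> 0.
Proof.
move=> linP [g [_ rankP]].
have coefs r : exists coef : 'I_m -> R[i],
    P (test_vec R (kap r)) = fun j => \sum_l coef l * g l j.
  exact/rankP/(inl2_supported (supported_test_vec_kap r)).
have [coef coefP] := boolp.choice coefs.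
(* the m + 1 vectors P f_(kap r) lie in the span of the m vectors g l *)
have [w w0 wC] := exists_nonzero_left_kernel (\matrix_(r, l) coef r l) (ltnSn m).
exists w => // lam.
rewrite /test_comb (@l2_linear_sum _ P _ _ _ _ bound linP supported_test_vec_kap).
apply: funext => j; under eq_bigr do rewrite coefP mulr_sumr.
rewrite exchange_big big1 // => l _.
have wl : \sum_r w 0 r * coef r l = 0.
  have := congr1 (fun A : 'M[R[i]]_(1, m) => A 0 l) wC; rewrite /= !mxE => wl.
  by rewrite -[RHS]wl; apply: eq_bigr => r _; rewrite mxE.
rewrite (_ : \sum_r _ = (\sum_r w 0 r * coef r l) * (lam * g l j)); first by rewrite wl mul0r.
by rewrite mulr_suml; apply: eq_bigr => r _; ring.
Qed.

Lemma approx_num_ge (c : R) : 0 <= c -> (forall r, c <= sigma alpha (kap r)) ->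
  ((c / 3)%:E <= approx_num (Ralpha alpha) m)%E.
Proof.
move=> c0 c_sigma; apply: le_ereal_inf_tmp => _ [P [linP rankP] <-].
have [w /rV0Pn[r wr] P_comb] := test_comb_kernel _ linP rankP.
have W0 := test_weight_gt0 _ _ wr.
pose lam := Num.sqrt (2 * test_weight (w 0))^-1.
pose v r := lam%:C * w 0 r.
have Wv : test_weight v = 2^-1.
  rewrite /test_weight; under eq_bigr do rewrite cmod2M cmod2_real -mulrA.
  rewrite -mulr_sumr sqr_sqrtr ?invr_ge0 ?mulr_ge0 ?ltW //.
  by rewrite invfM -mulrA mulVf ?mulr1 // gt_eqF.
apply: (@opnorm_ge R _ (test_comb v)); first by rewrite divr_ge0.
- exact: inl2_supported (supported_test_comb v).
- by apply: le_trans (sqnorm_test_comb v) _; rewrite Wv mulfV.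
rewrite /= P_comb (_ : _ \- _ = Ralpha alpha (test_comb v)); last first.
  by apply: funext => j /=; rewrite subr0.
apply: (le_trans _ (sqnorm_Ralpha_test_comb c v c0 c_sigma)); rewrite lee_fin Wv.
nra.
Qed.

End LowerBound.

Section Counting.
Variables (R : realType) (alpha : cseq R) (p : R).
Hypothesis p0 : 0 <= p.

Local Notation a n := (approx_num (Ralpha alpha) n).

Let sigma_le : rel nat := fun k k' => sigma alpha k <= sigma alpha k'.

Lemma sum_sigma_sorted (s : seq nat) : sorted sigma_le s -> uniq s ->
  {in s &, forall k k', k != k' -> well_separated k k'} ->
  (\sum_(k <- s) poweR (sigma alpha k)%:E p <=
   \sum_(0 <= n < size s) (3 `^ p)%:E * poweR (a n) p)%E.
Proof.
elim: s => [|k s IH] /= s_sorted; first by rewrite big_nil big_geq.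
move=> /andP[ks s_uniq] s_sep.
rewrite big_cons big_nat_recr //= addeC; apply: leeD.
  apply: IH => [|//|x y xs ys]; first exact: path_sorted s_sorted.
  by apply: s_sep; rewrite inE ?xs ?ys orbT.
have k_min : all (sigma_le k) s.
  by apply: order_path_min s_sorted => ? ? ?; apply: le_trans.
pose kap (r : 'I_(size s).+1) := nth 0%N (k :: s) r.
have kap_sep r r' : r != r' -> well_separated (kap r) (kap r').
  move=> rr'; apply: s_sep; rewrite ?(mem_nth _ (ltn_ord _)) //.
  by rewrite nth_uniq //= ks s_uniq.
have sigma_k r : sigma alpha k <= sigma alpha (kap r).
  have : kap r \in k :: s by rewrite (mem_nth _ (ltn_ord _)).
  by rewrite inE => /orP[/eqP -> // | /(allP k_min)].
have sigma0 : 0 <= sigma alpha k by apply: sqrtr_ge0.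
have a_ge := @approx_num_ge R alpha _ _ kap_sep _ sigma0 sigma_k.
have sigma3 : 0 <= sigma alpha k / 3 by rewrite divr_ge0.
rewrite -[sigma alpha k](@divfK _ 3) ?pnatr_eq0 // mulrC powRM //.
rewrite EFinM lee_pmul2l ?lte_fin ?powR_gt0 // -poweR_EFin.
apply: gt0_ler_poweR => //; rewrite in_itv /= leey ?andbT ?lee_fin //.
exact: le_trans a_ge.
Qed.

Lemma sum_sigma_le (s : seq nat) : uniq s ->
  {in s &, forall k k', k != k' -> well_separated k k'} ->
  (\sum_(k <- s) poweR (sigma alpha k)%:E p <=
   \sum_(0 <= n < size s) (3 `^ p)%:E * poweR (a n) p)%E.
Proof.
move=> s_uniq s_sep; have sigma_le_total : total sigma_le by move=> ? ?; apply: le_total.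
rewrite -(perm_big _ (permEl (perm_sort sigma_le s))) -(size_sort sigma_le s).
apply: sum_sigma_sorted; rewrite ?sort_sorted ?sort_uniq //.
by move=> x y; rewrite !mem_sort; apply: s_sep.
Qed.

Lemma sum_sigma_class_le (Q : pred nat) N :
  {in Q &, forall k k', k != k' -> well_separated k k'} ->
  (\sum_(0 <= k < N | Q k) poweR (sigma alpha k)%:E p <=
   (3 `^ p)%:E * \sum_(0 <= n <oo) poweR (a n) p)%E.
Proof.
move=> Q_sep; rewrite -big_filter; apply: le_trans (sum_sigma_le _ _ _) _.
- by rewrite filter_uniq ?iota_uniq.
- by move=> x y; rewrite !mem_filter => /andP[Qx _] /andP[Qy _]; apply: Q_sep.
rewrite -nneseriesZl => [|n _]; last exact: poweR_ge0.
apply: nneseries_lim_ge => n _ _; rewrite mule_ge0 ?lee_fin ?powR_ge0 ?poweR_ge0 //.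
Qed.

Lemma partial_sum_sigma_le N :
  (\sum_(0 <= k < N) poweR (sigma alpha k)%:E p <=
   (3 * 3 `^ p)%:E * \sum_(0 <= n <oo) poweR (a n) p)%E.
Proof.
rewrite (bigID (fun k => k %% 3 == 0)%N) [X in (_ + X <= _)%E](bigID (fun k => k %% 3 == 1)%N).
pose X := ((3 `^ p)%:E * \sum_(0 <= n <oo) poweR (a n) p)%E.
have X0 : (0 <= X)%E.
  by rewrite mule_ge0 ?lee_fin ?powR_ge0 // nneseries_ge0 // => n _ _; apply: poweR_ge0.
have -> : ((3 * 3 `^ p)%:E * \sum_(0 <= n <oo) poweR (a n) p = X + X + X)%E.
  rewrite EFinM -muleA -/X (_ : 3%:E = 1 + 1 + 1)%E; last by rewrite -!EFinD; congr EFin; lra.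
  by rewrite ge0_muleDl ?ge0_muleDl ?mul1e ?adde_ge0 ?lee01.
have mod3_sep q (Q : pred nat) : (forall k, Q k -> k %% 3 = q)%N ->
    {in Q &, forall k k', k != k' -> well_separated k k'}.
  by move=> Qq x y /Qq xq /Qq yq /eqP xy; rewrite /well_separated; lia.
rewrite /= addeA; apply: leeD; first apply: leeD; apply: sum_sigma_class_le.
- by apply: (mod3_sep 0%N) => k /eqP.
- by apply: (mod3_sep 1%N) => k /andP[_ /eqP].
- by apply: (mod3_sep 2%N) => k /andP[/eqP k0 /eqP k1]; lia.
Qed.

End Counting.

Theorem theorem5p5 (R : realType) (p : R) (hp : 0 < p) :
  exists C : R, forall alpha : cseq R, inl2 alpha ->
    (lpnorm p (fun k => (sigma alpha k)%:E)
      <= C%:E * lpnorm p (fun k => approx_num (Ralpha alpha) k))%E.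
Proof.
exists ((3 * 3 `^ p) `^ p^-1) => alpha _.
have p0 := ltW hp.
have sigma_le : (\sum_(0 <= k <oo) poweR (sigma alpha k)%:E p <=
    (3 * 3 `^ p)%:E * \sum_(0 <= n <oo) poweR (approx_num (Ralpha alpha) n) p)%E.
  apply: lime_le; first by apply: is_cvg_nneseries => n _ _; apply: poweR_ge0.
  by apply: nearW => N; apply: partial_sum_sigma_le.
rewrite /lpnorm -poweR_EFin -poweRM ?lee_fin ?mulr_ge0 ?powR_ge0 //; last first.
  by apply: nneseries_ge0 => n _ _; apply: poweR_ge0.
apply: gt0_ler_poweR sigma_le; rewrite ?invr_ge0 // in_itv /= leey ?andbT.
  by apply: nneseries_ge0 => n _ _; rewrite lee_fin powR_ge0.
by rewrite mule_ge0 ?lee_fin ?mulr_ge0 ?powR_ge0 // nneseries_ge0 // => n _ _; apply: poweR_ge0.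
Qed.
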